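(* Let $G(\circ)$, $G(\ast)$ be groups on $G$ and $a\in G$ with $\mathrm{dist}_a>0$ and $|a|_\circ=|a|_\ast$. Then $\mathrm{dist}_a\ge 3$.
   Context: $|a|_\circ$, $|a|_\ast$ are the orders of $a$ in $G(\circ)$, $G(\ast)$. $\mathrm{dist}_a=|\{b\in G: a\circ b\ne a\ast b\}|$. *)

(* Two group structures on the same finite set G are encoded as
   two finGroupTypes gT1 (= G(o)) and gT2 (= G( * )) together with a bijection
   f : gT1 -> gT2 identifying their carriers. *)
From mathcomp Require Import all_boot all_fingroup.
Set Implicit Arguments. Unset Strict Implicit. Unset Printing Implicit Defensive.
Local Open Scope group_scope.

Definition dist (gT1 gT2 : finGroupType) (f : gT1 -> gT2) (a : gT1) : nat :=
  #|[set b : gT1 | f (a * b) != f a * f b]|.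

From mathcomp Require Import all_boot all_fingroup cyclic.
Set Implicit Arguments.
Unset Strict Implicit.
Unset Printing Implicit Defensive.
Local Open Scope group_scope.

(* Let D be the set of b with a o b <> a * b.  Given x in D, the element z with
   a o z = a * x lies in D as well and differs from x.  If D were {x, z}, follow
   the orbit a^i o z (i >= 1) up to its first return w to D: on the way both
   products agree, so w = a^n o z and also w = a^n * x.  Since a has the same
   order in both groups, a^n is trivial in one group iff in the other, and
   either choice w = x or w = z then forces z = x. *)

Lemma expg_eq1_order_eq (gT1 gT2 : finGroupType) (x : gT1) (y : gT2) n :
  #[x] = #[y] -> (x ^+ n == 1) = (y ^+ n == 1).
Proof. by move=> eq_order; rewrite -!order_dvdn eq_order. Qed.

Lemma card_gt2_notsub2 (T : finType) (A : {set T}) x z :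
  x \in A -> z \in A -> x != z -> ~~ (A \subset [set x; z]) -> (2 < #|A|)%N.
Proof.
move=> xA zA neq_xz not_subA.
have ltA : [set x; z] \proper A by rewrite properE subUset !sub1set xA zA.
by have := proper_card ltA; rewrite cards2 neq_xz.
Qed.

Section DistSet.

Variables (gT1 gT2 : finGroupType) (f : gT1 -> gT2) (a : gT1).

Definition dist_set := [set b | f (a * b) != f a * f b].

Lemma dist_setE : dist f a = #|dist_set|.
Proof. by []. Qed.

Lemma notin_dist_set b : (b \notin dist_set) = (f (a * b) == f a * f b).
Proof. by rewrite inE negbK. Qed.

Lemma morphX_orbit b m :
    (forall i, (i < m)%N -> a ^+ i * b \notin dist_set) ->
  f (a ^+ m * b) = f a ^+ m * f b.
Proof.
elim: m => [|m IHm] agree; first by rewrite !expg0 !mul1g.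
have := agree m (ltnSn m); rewrite notin_dist_set => /eqP morph_m.
by rewrite expgS -mulgA morph_m IHm ?expgS ?mulgA // => i /ltnW/agree.
Qed.

Hypothesis f_inj : injective f.

Lemma dist_set_partner x z :
  x \in dist_set -> f (a * z) = f a * f x -> z \in dist_set /\ z != x.
Proof.
move=> xD faz.
have neq_zx : z != x.
  by apply: contraTneq xD => eq_zx; rewrite notin_dist_set -faz eq_zx.
split=> //; apply: contraR neq_zx; rewrite notin_dist_set faz.
by move=> /eqP/mulgI/f_inj ->.
Qed.

Hypothesis order_eq : #[a] = #[f a].

Lemma dist_set_notsub2 x z :
    x \in dist_set -> z \in dist_set -> z != x -> f (a * z) = f a * f x ->
  ~~ (dist_set \subset [set x; z]).
Proof.
move=> xD zD neq_zx faz; apply/negP => sub_xz.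
pose P m := a ^+ m.+1 * z \in dist_set.
have exP : exists m, P m.
  by exists #[a].-1; rewrite /P prednK ?order_gt0 // expg_order mul1g.
case: (ex_minnP exP) => n Pn minP.
have f_orbit : f (a ^+ n.+1 * z) = f a ^+ n.+1 * f x.
  rewrite expgSr -mulgA morphX_orbit ?faz ?mulgA ?expgSr // => i lt_in.
  by rewrite mulgA -expgSr; apply: contraTN lt_in => /minP; rewrite -leqNgt.
have := subsetP sub_xz _ Pn; rewrite !inE => /orP[] /eqP w_eq.
- suff an1 : a ^+ n.+1 = 1 by move: neq_zx; rewrite -w_eq an1 mul1g eqxx.
  apply/eqP; rewrite (expg_eq1_order_eq n.+1 order_eq).
  by apply/eqP/(mulIg (f x)); rewrite mul1g -f_orbit w_eq.
- have an1 : a ^+ n.+1 == 1 by apply/eqP/(mulIg z); rewrite mul1g w_eq.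
  move: an1; rewrite (expg_eq1_order_eq n.+1 order_eq) => /eqP fan1.
  move: f_orbit; rewrite w_eq fan1 mul1g => /f_inj eq_zx.
  by rewrite eq_zx eqxx in neq_zx.
Qed.

End DistSet.

Theorem lemma4p13 (gT1 gT2 : finGroupType) (f : gT1 -> gT2)
  (f_bij : bijective f) (a : gT1) :
  (0 < dist f a)%N -> #[a] = #[f a] -> (3 <= dist f a)%N.
Proof.
case: f_bij => g fK gK; have f_inj := can_inj fK.
rewrite dist_setE card_gt0 => /set0Pn[x xD] order_eq.
pose z := a^-1 * g (f a * f x).
have faz : f (a * z) = f a * f x by rewrite mulKVg gK.
have [zD neq_zx] := dist_set_partner f_inj xD faz.
apply: (card_gt2_notsub2 xD zD); first by rewrite eq_sym.
exact: (dist_set_notsub2 f_inj order_eq xD zD neq_zx faz).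
Qed.
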